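(* For every real $\alpha\ge1$ and every integer $n\ge1$, $$\sum_{k=1}^n(\alpha n)^{-\frac{k}{k+1}}\ \le\ \frac{1+e^{2/e}}{\sqrt\alpha}.$$ *)

From Stdlib Require Import Reals.

(* The term of index k is the product of alpha^(-k/(k+1)), which is at most
   1/sqrt alpha since k/(k+1) >= 1/2, and of n^(-k/(k+1)) = n^(1/(k+1)) / n.
   Writing n^(1/j) = 2x, Bernoulli's inequality gives 2x <= x^j + 2, i.e.
   n^(1/j) <= n/2^j + 2, so n^(-k/(k+1)) <= 2^-(k+1) + 2/n.  Summing over
   k = 1..n bounds the sum by (1/2 + 2)/sqrt alpha, and 5/2 <= 1 + e^(2/e)
   because e^(2/e) >= 1 + 2/e >= 1 + 2/3. *)
From Stdlib Require Import Reals Lra Lia.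
Open Scope R_scope.

Lemma double_le_pow_add2 (x : R) (j : nat) :
  0 <= x -> (2 <= j)%nat -> 2 * x <= x ^ j + 2.
Proof.
  intros Hx Hj.
  destruct (Rle_lt_dec x 1) as [Hle | Hgt].
  - assert (0 <= x ^ j) by (apply pow_le; lra); lra.
  - assert (Hj2 : 2 <= INR j) by (change 2 with (INR 2); apply le_INR; lia).
    pose proof (poly j (x - 1) ltac:(lra)) as Hbern.
    replace (1 + (x - 1)) with x in Hbern by ring.
    nra.
Qed.

Lemma Rpower_inv_le (N : R) (j : nat) :
  0 < N -> (2 <= j)%nat -> Rpower N (/ INR j) <= N / 2 ^ j + 2.
Proof.
  intros HN Hj.
  set (y := Rpower N (/ INR j)).
  assert (Hy : 0 < y) by apply exp_pos.
  assert (Hj0 : INR j <> 0) by (apply not_0_INR; lia).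
  assert (Hyj : y ^ j = N).
  { unfold y; rewrite <- Rpower_pow by apply exp_pos.
    rewrite Rpower_mult, Rinv_l by exact Hj0; apply Rpower_1, HN. }
  assert (Hhalf : N / 2 ^ j = (y / 2) ^ j).
  { rewrite <- Hyj; unfold Rdiv; rewrite Rpow_mult_distr, pow_inv; reflexivity. }
  rewrite Hhalf.
  pose proof (double_le_pow_add2 (y / 2) j ltac:(lra) Hj); lra.
Qed.

Lemma Rpower_neg_succ_ratio_le (N : R) (i : nat) : 0 < N ->
  Rpower N (- (INR (S i) / INR (S (S i)))) <= (1 / 2) ^ S (S i) + 2 / N.
Proof.
  intros HN.
  assert (Hj : 0 < INR (S (S i))) by (apply lt_0_INR; lia).
  replace (- (INR (S i) / INR (S (S i)))) with (/ INR (S (S i)) + - (1))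
    by (rewrite (S_INR (S i)) in Hj |- *; field; lra).
  rewrite Rpower_plus, Rpower_Ropp, Rpower_1 by exact HN.
  pose proof (Rpower_inv_le N (S (S i)) HN ltac:(lia)) as Hroot.
  assert (H2j : 0 < 2 ^ S (S i)) by (apply pow_lt; lra).
  replace ((1 / 2) ^ S (S i) + 2 / N) with ((N / 2 ^ S (S i) + 2) * / N)
    by (unfold Rdiv; rewrite Rmult_1_l, pow_inv; field; lra).
  apply Rmult_le_compat_r; [apply Rlt_le, Rinv_0_lt_compat |]; assumption.
Qed.

Lemma Rpower_neg_succ_ratio_le_inv_sqrt (a : R) (i : nat) : 1 <= a ->
  Rpower a (- (INR (S i) / INR (S (S i)))) <= / sqrt a.
Proof.
  intros Ha.
  rewrite <- Rpower_sqrt, <- Rpower_Ropp by lra.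
  apply Rle_Rpower; [exact Ha |].
  assert (Hk : 1 <= INR (S i)) by (change 1 with (INR 1); apply le_INR; lia).
  rewrite (S_INR (S i)).
  apply Ropp_le_contravar, (Rmult_le_reg_r (INR (S i) + 1)); [lra |].
  field_simplify; lra.
Qed.

Lemma sum_pow_half_from2 (m : nat) :
  sum_f_R0 (fun i => (1 / 2) ^ S (S i)) m = 1 / 2 - (1 / 2) ^ S (S m).
Proof.
  induction m as [|m IH]; [simpl; lra |].
  rewrite tech5, IH; simpl; lra.
Qed.

Lemma exp_two_div_e_ge : 3 / 2 <= exp (2 / exp 1).
Proof.
  pose proof exp_le_3 as He3.
  assert (He : 0 < exp 1) by apply exp_pos.
  assert (2 / 3 <= 2 / exp 1)
    by (apply Rmult_le_compat_l; [lra | apply Rinv_le_contravar; lra]).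
  assert (0 < 2 / exp 1) by (apply Rdiv_lt_0_compat; lra).
  pose proof (exp_ineq1 (2 / exp 1) ltac:(lra)); lra.
Qed.

Theorem mainTheorem4 (alpha : R) (n : nat) (Halpha : 1 <= alpha) (Hn : (1 <= n)%nat) :
  sum_f_R0 (fun i => Rpower (alpha * INR n) (- (INR (S i) / INR (S (S i))))) (n - 1)
  <= (1 + exp (2 / exp 1)) / sqrt alpha.
Proof.
  assert (HnR : 0 < INR n) by (apply lt_0_INR; lia).
  assert (Hc : 0 < / sqrt alpha) by (apply Rinv_0_lt_compat, sqrt_lt_R0; lra).
  apply Rle_trans with
    (sum_f_R0 (fun i => ((1 / 2) ^ S (S i) + 2 / INR n) * / sqrt alpha) (n - 1)).
  { apply sum_Rle; intros i _.
    rewrite <- Rpower_mult_distr, Rmult_comm by lra.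
    apply Rmult_le_compat; try (left; apply exp_pos).
    - apply Rpower_neg_succ_ratio_le, HnR.
    - apply Rpower_neg_succ_ratio_le_inv_sqrt, Halpha. }
  rewrite <- scal_sum, sum_plus, sum_pow_half_from2, sum_cte.
  replace (S (n - 1)) with n by lia.
  replace (2 / INR n * INR n) with 2 by (field; lra).
  pose proof exp_two_div_e_ge.
  assert (0 <= (1 / 2) ^ S n) by (apply pow_le; lra).
  unfold Rdiv; rewrite (Rmult_comm _ (/ sqrt alpha)).
  apply Rmult_le_compat_l; lra.
Qed.
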